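(* Let $n\ge 2$ be an integer, $A\subseteq L_n$, and let $B\subseteq L_n\setminus A$ be a closed uncountable subset of $(L_n,\tau_E|_{L_n})$. Then $(X_n,\tau(A))$ is neither normal nor countably paracompact.
   Context: For $\overline{x},\overline{a}\in\mathbb R^n$ let $|\overline{x}-\overline{a}|$ be the Euclidean distance and $B(\overline{a},\epsilon)=\{\overline{x}\in\mathbb R^n:|\overline{x}-\overline{a}|<\epsilon\}$. Let $P_n=\{\overline{x}\in\mathbb R^n: x_n>0\}$, $L_n=\{\overline{x}\in\mathbb R^n: x_n=0\}$, $X_n=P_n\cup L_n$, and let $\tau_E$ denote the Euclidean topology on $X_n$. For $\overline{a}\in L_n$ and $\epsilon>0$ put $\overline{a(\epsilon)}=(a_1,\dots,a_{n-1},\epsilon)$ and $\tilde B(\overline{a},\epsilon)=\{\overline{a}\}\cup B(\overline{a(\epsilon)},\epsilon)$. For $A\subseteq L_n$, the topology $\tau(A)$ on $X_n$ is generated by the local bases: at $\overline{a}\in P_n$, the sets $B(\overline{a},\epsilon)$ with $0<\epsilon<a_n$; at $\overline{a}\in A$, the sets $B(\overline{a},\epsilon)\cap X_n$ with $\epsilon>0$; at $\overline{a}\in L_n\setminus A$, the sets $\tilde B(\overline{a},\epsilon)$ with $\epsilon>0$. *)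

From HB Require Import structures.
From mathcomp Require Import all_boot all_order all_algebra.
From mathcomp Require Import all_classical all_reals.
Set Implicit Arguments. Unset Strict Implicit. Unset Printing Implicit Defensive.
Import Order.TTheory GRing.Theory Num.Theory.
Local Open Scope classical_set_scope.
Local Open Scope ring_scope.

Section Defs.
Variables (R : realType) (m : nat).
(* Points of R^(m+1); the last coordinate x_n is x ord_max. *)
Definition pt := 'I_m.+1 -> R.

Definition edist (x a : pt) : R := Num.sqrt (\sum_i (x i - a i) ^+ 2).
Definition eball (a : pt) (e : R) : set pt := [set x | edist x a < e].

Definition Pn : set pt := [set x | 0 < x ord_max].
Definition Ln : set pt := [set x | x ord_max = 0].
Definition Xn : set pt := Pn `|` Ln.

Definition a_eps (a : pt) (e : R) : pt := fun i => if i == ord_max then e else a i.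
Definition tball (a : pt) (e : R) : set pt := [set a] `|` eball (a_eps a e) e.

Definition basic_nbhd (A : set pt) (a : pt) (U : set pt) : Prop :=
  [\/ Pn a /\ exists e : R, [/\ 0 < e, e < a ord_max & U = eball a e],
      A a /\ exists e : R, 0 < e /\ U = eball a e `&` Xn
    | Ln a /\ ~ A a /\ exists e : R, 0 < e /\ U = tball a e].

Definition tau_open (A : set pt) (U : set pt) : Prop :=
  U `<=` Xn /\ forall x, U x -> exists V, basic_nbhd A x V /\ V `<=` U.

Definition tau_closed (A : set pt) (F : set pt) : Prop :=
  F `<=` Xn /\ tau_open A (Xn `\` F).

Definition tau_normal (A : set pt) : Prop :=
  forall F G, tau_closed A F -> tau_closed A G -> F `&` G = set0 ->
  exists U V, [/\ tau_open A U, tau_open A V, F `<=` U, G `<=` V & U `&` V = set0].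

Definition tau_countably_paracompact (A : set pt) : Prop :=
  forall U : nat -> set pt, (forall k, tau_open A (U k)) ->
  Xn `<=` \bigcup_k U k ->
  exists Vs : set (set pt),
    [/\ forall V, Vs V -> tau_open A V /\ exists k, V `<=` U k,
        Xn `<=` \bigcup_(V in Vs) V
      & forall x, Xn x -> exists W, [/\ tau_open A W, W x &
          finite_set [set V | Vs V /\ V `&` W !=set0]]].

Definition euclid_closed_in_Ln (B : set pt) : Prop :=
  B `<=` Ln /\
  forall x, Ln x -> (forall e : R, 0 < e -> exists2 b, B b & edist x b < e) -> B x.
End Defs.

From mathcomp Require Import all_boot all_order all_algebra.
From mathcomp Require Import all_classical all_reals.
From mathcomp Require Import lra ring.

(* Two tangent balls [tball b r] and [tball c s] at points of L_n meet as soon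
   as |b - c|^2 < 4rs, and every tau(A)-open set containing a point of
   L_n \ A contains a tangent ball at that point.  The condensation points of
   B form a nonempty perfect set Q, closed in L_n, with a dense sequence
   (c_k), and every subset of B is tau(A)-closed.  Given radii s_k at the c_k
   and r(b) at the other points of Q, the points b with r(b) >= 2^-n whose
   ball misses the balls at all c_k within distance 2^-n form a nowhere dense
   subset of Q, so by Baire's theorem some b outside {c_k} has its ball
   meeting the balls at points c_k arbitrarily close to b.  Applied to the
   disjoint closed sets {c_k} and Q \ {c_k}, this refutes normality.  For
   countable paracompactness, cover X_n by X_n \ {c_k} and the sets
   (X_n \ B) u {c_j}: each member of a refinement contains at most one c_k,
   so every neighbourhood of b meets infinitely many members. *)

Set Implicit Arguments. Unset Strict Implicit. Unset Printing Implicit Defensive.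
Import Order.TTheory GRing.Theory Num.Theory.
Local Open Scope classical_set_scope.
Local Open Scope ring_scope.

Section Euclid.
Variables (R : realType) (m : nat).
Implicit Types (x y z a : pt R m) (u v : 'I_m.+1 -> R).

Definition sqdist x a : R := \sum_i (x i - a i) ^+ 2.

Lemma sqdist_ge0 x a : 0 <= sqdist x a.
Proof. by apply: sumr_ge0 => i _; rewrite sqr_ge0. Qed.

Lemma edist_ge0 x a : 0 <= edist x a.
Proof. exact: sqrtr_ge0. Qed.

Lemma sqr_edist x a : edist x a ^+ 2 = sqdist x a.
Proof. by rewrite sqr_sqrtr // sqdist_ge0. Qed.

Lemma sqdistC x a : sqdist x a = sqdist a x.
Proof. by apply: eq_bigr => i _; rewrite -sqrrN opprB. Qed.

Lemma edistC x a : edist x a = edist a x.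
Proof. by rewrite /edist -/(sqdist x a) sqdistC. Qed.

Lemma edistxx x : edist x x = 0.
Proof. by rewrite /edist big1 ?sqrtr0 // => i _; rewrite subrr expr0n. Qed.

Lemma edist_lt_sqr x a e : 0 <= e -> (edist x a < e) = (sqdist x a < e ^+ 2).
Proof. by move=> e0; rewrite -sqr_edist ltr_pXn2r // ?nnegrE ?edist_ge0. Qed.

Lemma ler_coord_edist x a i : `|x i - a i| <= edist x a.
Proof.
rewrite -sqrtr_sqr ler_sqrt ?sqdist_ge0 // /sqdist (bigD1 i) //= lerDl.
by apply: sumr_ge0 => j _; exact: sqr_ge0.
Qed.

Lemma edist_eq0 x a : edist x a = 0 -> x = a.
Proof.
move=> h; apply: funext => i; apply/eqP; rewrite -subr_eq0 -normr_le0.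
by rewrite -h ler_coord_edist.
Qed.

Lemma edist_gt0 x a : x <> a -> 0 < edist x a.
Proof.
by move=> nxa; rewrite lt_def edist_ge0 andbT; apply/eqP => /edist_eq0.
Qed.

Lemma sum_sqr_le_sqr_sum (I : Type) (r : seq I) (f : I -> R) :
  (forall i, 0 <= f i) -> \sum_(i <- r) f i ^+ 2 <= (\sum_(i <- r) f i) ^+ 2.
Proof.
move=> f0; elim: r => [|j r IH]; first by rewrite !big_nil expr0n.
rewrite !big_cons; have := f0 j; have : 0 <= \sum_(i <- r) f i by exact: sumr_ge0.
nra.
Qed.

Lemma edist_le_sum x a : edist x a <= \sum_i `|x i - a i|.
Proof.
rewrite -[leRHS]ger0_norm ?sumr_ge0 // -sqrtr_sqr ler_sqrt ?sqr_ge0 //.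
rewrite /sqdist (eq_bigr (fun i => `|x i - a i| ^+ 2)); last first.
  by move=> i _; rewrite real_normK ?num_real.
exact: sum_sqr_le_sqr_sum.
Qed.

Lemma cauchy_schwarz u v :
  (\sum_i u i * v i) ^+ 2 <= (\sum_i u i ^+ 2) * (\sum_i v i ^+ 2).
Proof.
pose w i j := u i * v j.
have -> : (\sum_i u i * v i) ^+ 2 = \sum_i \sum_j w i j * w j i.
  rewrite expr2 mulr_suml; apply: eq_bigr => i _.
  by rewrite mulr_sumr; apply: eq_bigr => j _; rewrite /w; ring.
have -> : (\sum_i u i ^+ 2) * (\sum_i v i ^+ 2) = \sum_i \sum_j w i j ^+ 2.
  rewrite mulr_suml; apply: eq_bigr => i _.
  by rewrite mulr_sumr; apply: eq_bigr => j _; rewrite /w exprMn.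
have wC : \sum_i \sum_j w j i ^+ 2 = \sum_i \sum_j w i j ^+ 2 by rewrite exchange_big.
have amgm i j : w i j * w j i <= (w i j ^+ 2 + w j i ^+ 2) / 2.
  by have := sqr_ge0 (w i j - w j i); lra.
apply: (le_trans (ler_sum _ (fun i _ => ler_sum _ (fun j _ => amgm i j)))).
under eq_bigr do rewrite -mulr_suml big_split /=.
rewrite -mulr_suml big_split /= wC; lra.
Qed.

Lemma edist_triangle x y z : edist x z <= edist x y + edist y z.
Proof.
have d1 := edist_ge0 x y; have d2 := edist_ge0 y z.
rewrite -[leRHS]ger0_norm ?addr_ge0 // -sqrtr_sqr ler_sqrt ?sqr_ge0 // -/(sqdist x z).
have -> : sqdist x z = sqdist x y + 2 * \sum_i (x i - y i) * (y i - z i) + sqdist y z.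
  rewrite /sqdist mulr_sumr -!big_split /=; apply: eq_bigr => i _; ring.
have := cauchy_schwarz (fun i => x i - y i) (fun i => y i - z i).
rewrite -/(sqdist x y) -/(sqdist y z) -!sqr_edist.
have := mulr_ge0 d1 d2; nra.
Qed.

End Euclid.

Section TangentBalls.
Variables (R : realType) (m : nat).
Implicit Types (x y a b c : pt R m) (e r s : R).
Local Notation Ln := (@Ln R m).
Local Notation Pn := (@Pn R m).
Local Notation Xn := (@Xn R m).

Lemma Pn_notLn x : Pn x -> ~ Ln x.
Proof. by rewrite /Pn /Ln /= => + x0; rewrite x0 ltxx. Qed.

Lemma eball_a_eps_sub_Pn a e : eball (a_eps a e) e `<=` Pn.
Proof.
move=> y; rewrite /eball /Pn /= => ye.
have := le_lt_trans (ler_coord_edist y (a_eps a e) ord_max) ye.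
by rewrite /a_eps eqxx ltr_norml => /andP[+ _]; lra.
Qed.

Lemma eball_half_sub_Pn x : Pn x -> eball x (x ord_max / 2) `<=` Pn.
Proof.
rewrite /Pn /= => x0 y; rewrite /eball /= => yx.
have := le_lt_trans (ler_coord_edist y x ord_max) yx.
by rewrite ltr_norml => /andP[+ _]; lra.
Qed.

Lemma tball_sub_Xn a e : Ln a -> tball a e `<=` Xn.
Proof. by move=> La y [->|/eball_a_eps_sub_Pn]; [right|left]. Qed.

Lemma tball_Ln a e y : tball a e y -> Ln y -> y = a.
Proof. by case=> [->//|/eball_a_eps_sub_Pn/Pn_notLn]. Qed.

Lemma sqdist_a_eps b c r s : Ln b -> Ln c ->
  sqdist (a_eps b r) (a_eps c s) = sqdist b c + (r - s) ^+ 2.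
Proof.
move=> Lb Lc; rewrite /sqdist (eq_bigr (fun i =>
  (b i - c i) ^+ 2 + (if i == ord_max then (r - s) ^+ 2 else 0))).
  by rewrite big_split /= -big_mkcond big_pred1_eq.
move=> i _; rewrite /a_eps; case: eqP => [->|_]; last by rewrite addr0.
by rewrite Lb Lc subrr expr0n add0r.
Qed.

Lemma edist_convex_lt a b r s : 0 < r -> 0 < s -> edist a b < r + s ->
  edist (fun i => (s * a i + r * b i) / (r + s)) a < r.
Proof.
move=> r0 s0 abrs; have rs0 : r + s != 0 by rewrite gt_eqF ?addr_gt0.
set k := r / (r + s); have k0 : 0 < k by rewrite divr_gt0 ?addr_gt0.
rewrite edist_lt_sqr ?ltW //.
have -> : sqdist (fun i => (s * a i + r * b i) / (r + s)) a = k ^+ 2 * sqdist b a.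
  rewrite /sqdist mulr_sumr; apply: eq_bigr => i _.
  by rewrite -exprMn; congr (_ ^+ 2); rewrite /k; field.
have kr : k * (r + s) = r by rewrite /k divfK.
rewrite -[X in _ < X ^+ 2]kr [X in _ < X]exprMn ltr_pM2l ?exprn_gt0 //.
rewrite -sqr_edist edistC ltr_pXn2r ?nnegrE ?edist_ge0 //.
by rewrite ltW ?addr_gt0.
Qed.

Lemma eball_meet a b r s : 0 < r -> 0 < s -> edist a b < r + s ->
  eball a r `&` eball b s !=set0.
Proof.
move=> r0 s0 abrs; exists (fun i => (s * a i + r * b i) / (r + s)); split.
  exact: edist_convex_lt.
have -> : (fun i => (s * a i + r * b i) / (r + s)) = (fun i => (r * b i + s * a i) / (s + r)).
  by apply: funext => i; rewrite addrC [s + r]addrC.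
by apply: edist_convex_lt; rewrite // edistC addrC.
Qed.

Lemma tball_meet b c r s : Ln b -> Ln c -> 0 < r -> 0 < s ->
  sqdist b c < 4 * r * s -> tball b r `&` tball c s !=set0.
Proof.
move=> Lb Lc r0 s0 bc; have [p [pb pc]] : eball (a_eps b r) r `&` eball (a_eps c s) s !=set0.
  apply: eball_meet; rewrite // edist_lt_sqr ?ltW ?addr_gt0 // sqdist_a_eps //; lra.
by exists p; split; right.
Qed.

End TangentBalls.

Section TauTopology.
Variables (R : realType) (m : nat).
Implicit Types (x y c : pt R m) (F S U : set (pt R m)).
Local Notation Ln := (@Ln R m).
Local Notation Pn := (@Pn R m).
Local Notation Xn := (@Xn R m).
Variable A : set (pt R m).

Lemma tau_open_tball U c : tau_open A U -> U c -> Ln c -> ~ A c ->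
  exists2 e, 0 < e & tball c e `<=` U.
Proof.
move=> [_ hU] Uc Lc nAc; have [V [+ VU]] := hU c Uc.
case=> [[/Pn_notLn//]|[//]|[_ [_ [e [e0 eV]]]]].
by exists e; rewrite -?eV.
Qed.

Lemma tau_open_tball_radius S (O : pt R m -> set (pt R m)) :
  S `<=` Ln `\` A -> (forall x, S x -> tau_open A (O x) /\ O x x) ->
  exists r : pt R m -> R, (forall x, 0 < r x) /\ forall x, S x -> tball x (r x) `<=` O x.
Proof.
move=> SLA SO; suff /choice[r hr] : forall x, exists e, 0 < e /\ (S x -> tball x e `<=` O x).
  by exists r; split => x; [case: (hr x)|case: (hr x) => _; apply].
move=> x; have [Sx|nSx] := pselect (S x); last by exists 1; split.
have [[Lx nAx] [oO Ox]] := (SLA x Sx, SO x Sx).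
by have [e e0 eO] := tau_open_tball oO Ox Lx nAx; exists e.
Qed.

Lemma euclid_closed_far F x : euclid_closed_in_Ln F -> Ln x -> ~ F x ->
  exists2 e, 0 < e & forall y, F y -> e <= edist x y.
Proof.
move=> [_ Fcl] Lx nFx; apply: contrapT => nfar; apply: nFx; apply: Fcl => // e e0.
apply: contrapT => nnear; apply: nfar; exists e => // y Fy.
by rewrite leNgt; apply/negP => ye; apply: nnear; exists y.
Qed.

Variable B : set (pt R m).
Hypothesis BLA : B `<=` Ln `\` A.
Hypothesis Bcl : euclid_closed_in_Ln B.

Lemma tau_open_XnD F : F `<=` B -> tau_open A (Xn `\` F).
Proof.
move=> FB; split=> [x []//|x [[Px|Lx] nFx]].
- have x0 : 0 < x ord_max / 2 by rewrite divr_gt0.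
  exists (eball x (x ord_max / 2)); split.
    by apply: Or31; split => //; exists (x ord_max / 2); split => //; lra.
  move=> y /eball_half_sub_Pn-/(_ Px) Py; split; first by left.
  by move=> /FB/BLA[/(Pn_notLn Py)].
- have [Ax|nAx] := pselect (A x).
    have [e e0 xfar] := euclid_closed_far Bcl Lx (fun Bx => (BLA Bx).2 Ax).
    exists (eball x e `&` Xn); split; first by apply: Or32; split => //; exists e.
    move=> y [ye Xy]; split => // /FB/xfar; rewrite edistC.
    by rewrite /eball /= in ye; lra.
  exists (tball x 1); split; first by apply: Or33; split => //; split => //; exists 1.
  move=> y xy; split; first exact: tball_sub_Xn xy.
  by move=> Fy; apply: nFx; rewrite -(tball_Ln xy (BLA (FB _ Fy)).1).
Qed.

Lemma tau_closed_sub F : F `<=` B -> tau_closed A F.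
Proof.
by move=> FB; split; [move=> x /FB/BLA[Lx _]; right|exact: tau_open_XnD].
Qed.

Lemma tau_open_XnDU1 c : B c -> tau_open A ((Xn `\` B) `|` [set c]).
Proof.
move=> Bc; have [Lc nAc] := BLA Bc; split=> [x [[]//|->]|x [XBx|->]]; first by right.
  have [_ /(_ x XBx)[V [bV VXB]]] := tau_open_XnD (@subset_refl _ B).
  by exists V; split => // y /VXB; left.
exists (tball c 1); split; first by apply: Or33; split => //; split => //; exists 1.
move=> y [->|/eball_a_eps_sub_Pn Py]; [by right|left; split; first by left].
by move=> /BLA[/(Pn_notLn Py)].
Qed.

End TauTopology.

Section Dyadic.
Variable R : realType.

Lemma exp2N_gt0 n : 0 < 2 ^- n :> R.
Proof. by rewrite invr_gt0 exprn_gt0. Qed.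

Lemma exp2NS n : 2 ^- n.+1 = 2 ^- n / 2 :> R.
Proof. by rewrite exprSr invfM. Qed.

Lemma exp2N_le n k : (n <= k)%N -> 2 ^- k <= 2 ^- n :> R.
Proof. by move=> nk; rewrite lef_pV2 ?posrE ?exprn_gt0 // ler_eXn2l // ltr1n. Qed.

Lemma exp2N_small (C e : R) : 0 < C -> 0 < e -> exists n, C * 2 ^- n < e.
Proof.
move=> C0 e0; have eC0 : 0 < e / C by rewrite divr_gt0.
exists (Num.Def.archi_bound (e / C)^-1); rewrite mulrC -ltr_pdivlMr //.
have := @upper_nthrootP R (e / C)^-1 _ (leqnn _).
by rewrite -[X in _ -> _ < X](invrK (e / C)) ltf_pV2 ?posrE ?invr_gt0 ?exprn_gt0.
Qed.

Lemma dyadic_cauchy_lim (u : nat -> R) :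
  (forall n k, `|u (n + k)%N - u n| < 2 ^- n) -> exists l, forall n, `|l - u n| <= 2 ^- n.
Proof.
move=> uC; have u_le n N : u N - 2 ^- N <= u n + 2 ^- n.
  have := exp2N_gt0 N; have := exp2N_gt0 n; have [nN|Nn] := leqP n N.
    by have := uC n (N - n)%N; rewrite subnKC // ltr_norml => /andP[? ?]; lra.
  by have := uC N (n - N)%N; rewrite subnKC ?(ltnW Nn) // ltr_norml => /andP[? ?]; lra.
pose E := [set u N - 2 ^- N | N in [set: nat]].
have E0 : E !=set0 by exists (u 0%N - 2 ^- 0); exists 0%N.
have Esup : has_sup E by split => //; exists (u 0%N + 2 ^- 0) => _ [N _ <-].
exists (sup E) => n; rewrite ler_norml.
have lo : u n - 2 ^- n <= sup E by apply: sup_upper_bound => //; exists n.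
have hi : sup E <= u n + 2 ^- n by apply: ge_sup => // _ [N _ <-].
by apply/andP; split; lra.
Qed.

End Dyadic.

Lemma countableU T (X Y : set T) : countable X -> countable Y -> countable (X `|` Y).
Proof.
move=> cX cY; apply: (@sub_countable _ _ _ (\bigcup_(b in [set: bool]) if b then X else Y)).
  by apply: subset_card_le => x [Xx|Yx]; [exists true|exists false].
by apply: bigcup_countable => // -[].
Qed.

Section Separability.
Variables (R : realType) (m : nat).
Local Notation pt := (pt R m).
Implicit Types (x y : pt) (Q : set pt).

Definition rat_center (z : {ffun 'I_m.+1 -> rat}) : pt := fun i => ratr (z i).
Definition rat_ball (z : {ffun 'I_m.+1 -> rat} * nat) := eball (rat_center z.1) (2 ^- z.2).

Lemma rat_center_approx x d : 0 < d -> exists z, edist x (rat_center z) < d.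
Proof.
move=> d0; pose dl := d / m.+2%:R.
have dl0 : 0 < dl by rewrite divr_gt0 ?ltr0n.
have /choice[q qx] : forall i, exists q : rat, `|x i - ratr q| < dl.
  move=> i; have [q] := @rat_in_itvoo R (x i - dl) (x i + dl) ltac:(lra).
  by rewrite in_itv /= => /andP[? ?]; exists q; rewrite ltr_norml; apply/andP; split; lra.
exists [ffun i => q i]; apply: le_lt_trans (edist_le_sum _ _) _.
apply: (@le_lt_trans _ _ (\sum_(i < m.+1) dl)).
  by apply: ler_sum => i _; rewrite /rat_center ffunE ltW.
rewrite sumr_const card_ord -mulr_natr mulrAC ltr_pdivrMr ?ltr0n //.
by rewrite ltr_pM2l // ltr_nat.
Qed.

Lemma rat_ball_small x e : 0 < e -> exists z, rat_ball z x /\ rat_ball z `<=` eball x e.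
Proof.
move=> e0; have [n ne] := exp2N_small (ltr0Sn R 1) e0.
have [z zx] := rat_center_approx x (exp2N_gt0 R n).
exists (z, n); split => // y; rewrite /rat_ball /eball /= => yz.
apply: le_lt_trans (edist_triangle y (rat_center z) x) _.
by rewrite (edistC _ x); lra.
Qed.

Lemma exists_dense_seq Q x0 : Q x0 -> exists c : nat -> pt,
  (forall k, Q (c k)) /\ forall x e, Q x -> 0 < e -> exists k, edist (c k) x < e.
Proof.
move=> Qx0; have /choice[g gQ] : forall z, exists y,
    Q y /\ ((exists2 y', Q y' & rat_ball z y') -> rat_ball z y).
  move=> z; have [[y' Qy' zy']|nz] := pselect (exists2 y', Q y' & rat_ball z y').
    by exists y'.
  by exists x0; split => // ?; exfalso.
pose z0 : {ffun 'I_m.+1 -> rat} * nat := ([ffun => 0], 0%N).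
pose ball_of k := odflt z0 (unpickle k).
exists (fun k => g (ball_of k)); split => [k|x e Qx e0]; first by case: (gQ (ball_of k)).
have [z [zx ze]] := rat_ball_small x e0.
exists (pickle z); rewrite /ball_of pickleK /=.
by apply: ze; apply: (gQ z).2; exists x.
Qed.

End Separability.

Section Condensation.
Variables (R : realType) (m : nat).
Local Notation pt := (pt R m).
Variable B : set pt.

Definition condensation := [set x | B x /\ forall e, 0 < e -> ~ countable (B `&` eball x e)].

Lemma condensation_sub : condensation `<=` B.
Proof. by move=> x []. Qed.

Lemma countable_setD_condensation : countable (B `\` condensation).
Proof.
pose D := [set z | countable (B `&` rat_ball z)].
apply: (@sub_countable _ _ _ (\bigcup_(z in D) (B `&` rat_ball z))); last first.
  exact: bigcup_countable (countableP _) _.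
apply: subset_card_le => b [Bb nCb].
have [e e0 ce] : exists2 e, 0 < e & countable (B `&` eball b e).
  by apply: contrapT => nc; apply: nCb; split => // e e0 ce; apply: nc; exists e.
have [z [zb ze]] := rat_ball_small b e0.
exists z => //; rewrite /D /=; apply: sub_countable ce; apply: subset_card_le.
by move=> y [By /ze]; split.
Qed.

Lemma condensation_nonempty : ~ countable B -> condensation !=set0.
Proof.
move=> Bunc; apply: contrapT => nC; apply: Bunc.
suff -> : B = B `\` condensation by exact: countable_setD_condensation.
by apply/seteqP; split => [x Bx|x []//]; split => // Cx; apply: nC; exists x.
Qed.

Lemma condensation_closed : euclid_closed_in_Ln B -> euclid_closed_in_Ln condensation.
Proof.
move=> [BL Bcl]; split=> [x [/BL//]|x Lx xlim]; split.
  by apply: Bcl => // e e0; have [y [By _] ?] := xlim e e0; exists y.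
move=> e e0 cx; have [y [By yunc] xy] := xlim (e / 2) ltac:(lra).
apply: (yunc (e / 2) ltac:(lra)); apply: sub_countable cx; apply: subset_card_le.
move=> z [Bz zy]; split => //; rewrite /eball /= in zy *.
by apply: le_lt_trans (edist_triangle z y x) _; rewrite (edistC y x); lra.
Qed.

Lemma condensation_perfect x e : condensation x -> 0 < e ->
  exists y, [/\ condensation y, y <> x & edist y x < e].
Proof.
move=> [Bx xunc] e0; apply: contrapT => nperf; apply: (xunc e e0).
apply: (@sub_countable _ _ _ ([set x] `|` (B `\` condensation))); last first.
  exact: countableU (countable1 x) countable_setD_condensation.
apply: subset_card_le => y [By xy]; have [Cy|] := pselect (condensation y); last by right.
by have [->|yx] := pselect (y = x); [left|exfalso; apply: nperf; exists y].
Qed.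

End Condensation.

Section Baire.
Variables (R : realType) (m : nat).
Local Notation pt := (pt R m).
Implicit Types (Q G : set pt) (x y p q : pt).

Lemma dyadic_cauchy_lim_pt (q : nat -> pt) :
  (forall n k, edist (q (n + k)%N) (q n) < 2 ^- n) ->
  exists x, forall n, edist x (q n) <= m.+1%:R * 2 ^- n.
Proof.
move=> qC; have /choice[x xq] : forall i, exists l, forall n, `|l - q n i| <= 2 ^- n.
  by move=> i; apply: dyadic_cauchy_lim => n k; apply: le_lt_trans (qC n k); exact: ler_coord_edist.
exists x => n; apply: le_trans (edist_le_sum _ _) _.
apply: (@le_trans _ _ (\sum_(i < m.+1) 2 ^- n)); first exact: ler_sum.
by rewrite sumr_const card_ord mulr_natl.
Qed.

Lemma euclid_closed_lim Q (q : nat -> pt) x (C : R) : euclid_closed_in_Ln Q ->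
  (forall n, Q (q n)) -> 0 < C -> (forall n, edist x (q n) <= C * 2 ^- n) -> Q x.
Proof.
move=> [QL Qcl] Qq C0 xq; apply: Qcl => [|e e0]; last first.
  by have [n ne] := exp2N_small C0 e0; exists (q n) => //; apply: le_lt_trans (xq n) _.
apply/eqP; rewrite -normr_le0 leNgt; apply/negP => x0.
have [n nx] := exp2N_small C0 x0.
have := le_trans (ler_coord_edist x (q n) ord_max) (xq n).
by rewrite (QL _ (Qq n)) subr0; lra.
Qed.

Definition nowhere_dense_in Q G := forall p r, Q p -> 0 < r ->
  exists q t, [/\ Q q, 0 < t, eball q t `<=` eball p r & eball q t `<=` ~` G].

Lemma nowhere_dense_inU Q G1 G2 :
  nowhere_dense_in Q G1 -> nowhere_dense_in Q G2 -> nowhere_dense_in Q (G1 `|` G2).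
Proof.
move=> nd1 nd2 p r Qp r0; have [q [t [Qq t0 qp qG1]]] := nd1 p r Qp r0.
have [q' [t' [Qq' t'0 q'q q'G2]]] := nd2 q t Qq t0.
exists q', t'; split => // [y /q'q/qp//|y y'q [/(qG1 y (q'q y y'q))|/(q'G2 y y'q)]//].
Qed.

Lemma nested_dyadic_balls Q (G : nat -> set pt) x0 :
  Q x0 -> (forall n, nowhere_dense_in Q (G n)) ->
  exists (q : nat -> pt) (t : nat -> R), forall n, [/\ Q (q n), 0 < t n, t n <= 2 ^- n,
    eball (q n.+1) (t n.+1) `<=` eball (q n) (t n) & eball (q n.+1) (2 * t n.+1) `<=` ~` G n].
Proof.
move=> Qx0 Gnd.
have /choice[f fP] : forall z : nat * (pt * R), exists w : pt * R, Q z.2.1 -> 0 < z.2.2 ->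
    [/\ Q w.1, 0 < w.2, eball w.1 w.2 `<=` eball z.2.1 z.2.2 & eball w.1 w.2 `<=` ~` G z.1].
  move=> [n [p r]] /=; have [[Qp r0]|] := pselect (Q p /\ 0 < r).
    by have [q [t ?]] := Gnd n p r Qp r0; exists (q, t).
  by move=> npr; exists (p, r) => Qp r0; exfalso; apply: npr.
pose fix balls n : pt * R := if n is k.+1 then
  ((f (k, balls k)).1, Num.min (f (k, balls k)).2 (balls k).2 / 2) else (x0, 1).
exists (fun n => (balls n).1), (fun n => (balls n).2).
have inv n : [/\ Q (balls n).1, 0 < (balls n).2 & (balls n).2 <= 2 ^- n].
  elim: n => [|n [Qn tn tn2]]; first by rewrite /= expr0 invr1.
  have [Qf tf _ _] := fP (n, balls n) Qn tn.
  rewrite /= exp2NS ler_pM2r ?invr_gt0 // divr_gt0 ?lt_min ?tf ?tn //.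
  by split => //; apply: le_trans tn2; rewrite ge_min lexx orbT.
move=> n; have [Qn tn tn2] := inv n; have [Qf tf fsub fG] := fP (n, balls n) Qn tn.
have [Qn1 tn1 _] := inv n.+1.
have tf2 : 2 * (balls n.+1).2 <= (f (n, balls n)).2.
  by rewrite /= mulrC divfK ?pnatr_eq0 // ge_min lexx.
move: tn1 tf2 => /= tn1 tf2.
by split => // y; rewrite /eball /= => yq; [apply: fsub|apply: fG]; rewrite /eball /=; lra.
Qed.

Lemma baire_euclid_closed Q (G : nat -> set pt) x0 :
  euclid_closed_in_Ln Q -> Q x0 -> (forall n, nowhere_dense_in Q (G n)) ->
  exists2 x, Q x & forall n, ~ G n x.
Proof.
move=> Qcl Qx0 Gnd; have [q [t qt]] := nested_dyadic_balls Qx0 Gnd.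
have nestN n k : eball (q (n + k)%N) (t (n + k)%N) `<=` eball (q n) (t n).
  elim: k => [|k IH]; first by rewrite addn0.
  by have [_ _ _ sub _] := qt (n + k)%N; rewrite addnS => y /sub/IH.
have qin n k : edist (q (n + k)%N) (q n) < t n.
  by apply: (nestN n k); rewrite /eball /= edistxx; case: (qt (n + k)%N).
have C0 : 0 < m.+1%:R :> R by rewrite ltr0n.
have [x xq] : exists x, forall n, edist x (q n) <= m.+1%:R * 2 ^- n.
  by apply: dyadic_cauchy_lim_pt => n k; have [_ _ tn _ _] := qt n; apply: lt_le_trans (qin n k) tn.
exists x; first by apply: euclid_closed_lim Qcl _ C0 xq => n; case: (qt n).
move=> n; have [_ _ _ _ avoid] := qt n; apply: avoid; rewrite /eball /=.
have [_ tn1 _ _ _] := qt n.+1; have [k kt] := exp2N_small C0 tn1.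
apply: le_lt_trans (edist_triangle x (q (n.+1 + k)%N) (q n.+1)) _.
have := le_trans (xq (n.+1 + k)%N) (ler_wpM2l (ltW C0) (exp2N_le R (leq_addl n.+1 k))).
by have := qin n.+1 k; lra.
Qed.

End Baire.

Section TangentBallsNearby.
Variables (R : realType) (m : nat).
Local Notation pt := (pt R m).
Implicit Types (x y p b : pt).
Variables (Q : set pt) (c : nat -> pt) (s : nat -> R) (r : pt -> R).
Hypothesis Qcl : euclid_closed_in_Ln Q.
Hypothesis Qperfect : forall x e, Q x -> 0 < e -> exists y, [/\ Q y, y <> x & edist y x < e].
Hypothesis cQ : forall k, Q (c k).
Hypothesis c_dense : forall x e, Q x -> 0 < e -> exists k, edist (c k) x < e.
Hypothesis s_gt0 : forall k, 0 < s k.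
Hypothesis r_gt0 : forall x, 0 < r x.

Lemma nowhere_dense_in_set1 x : nowhere_dense_in Q [set x].
Proof.
move=> p e Qp e0; have [y [Qy yx yp]] : exists y, [/\ Q y, y <> x & edist y p < e / 2].
  have [<-|px] := pselect (p = x); first by apply: Qperfect => //; lra.
  by exists p; rewrite edistxx; split => //; lra.
set t := Num.min (e / 2) (edist x y).
have te : t <= e / 2 by rewrite ge_min lexx.
have txy : t <= edist x y by rewrite ge_min lexx orbT.
exists y, t; split => //; first by rewrite lt_min edist_gt0 ?andbT; [lra|apply: nesym].
  move=> z; rewrite /eball /= => zy; apply: le_lt_trans (edist_triangle z y p) _; lra.
by move=> z; rewrite /eball /= => + zx; rewrite zx; lra.
Qed.

Definition tangent_separated n := [set b | 2 ^- n <= r b /\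
  forall k, edist b (c k) < 2 ^- n -> 4 * r b * s k <= sqdist b (c k)].

Lemma nowhere_dense_tangent_separated n : nowhere_dense_in Q (tangent_separated n).
Proof.
move=> p e Qp e0; have [k kp] := c_dense Qp (divr_gt0 e0 (ltr0Sn R 1)).
have sk := s_gt0 k; have hn := exp2N_gt0 R n.
set t := Num.min (e / 2) (Num.min (2 ^- n) (Num.min 1 (2 * s k * 2 ^- n))).
have [te tn t1 ts] : [/\ t <= e / 2, t <= 2 ^- n, t <= 1 & t <= 2 * s k * 2 ^- n].
  by rewrite !ge_min !lexx !orbT.
have t0 : 0 < t.
  by rewrite !lt_min ltr01 hn divr_gt0 //= !mulr_gt0.
exists (c k), t; split => //; [move=> z|move=> b]; rewrite /eball /=.
  by move=> zc; apply: le_lt_trans (edist_triangle z (c k) p) _; lra.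
move=> bc [rb /(_ k (lt_le_trans bc tn))]; rewrite -sqr_edist.
have := edist_ge0 b (c k); have : 2 ^- n * s k <= r b * s k by rewrite ler_pM2r.
have := mulr_gt0 hn sk; nra.
Qed.

Lemma tangent_balls_meet_nearby : exists2 b, Q b /\ ~ range c b &
  forall d, 0 < d -> exists k, edist b (c k) < d /\ tball b (r b) `&` tball (c k) (s k) !=set0.
Proof.
pose G n := [set c n] `|` tangent_separated n.
have Gnd n : nowhere_dense_in Q (G n).
  exact: nowhere_dense_inU (nowhere_dense_in_set1 _) (nowhere_dense_tangent_separated n).
have [b Qb bG] := baire_euclid_closed Qcl (cQ 0) Gnd.
exists b; first by split => // -[k _ ckb]; apply: (bG k); left.
apply: contrapT => /existsNP[d /not_implyP[d0 /forallNP far]].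
have bd0 : 0 < Num.min (r b) d by rewrite lt_min r_gt0.
have [n] := exp2N_small ltr01 bd0; rewrite mul1r lt_min => /andP[nr nd].
apply: (bG n); right; split => [|k bk]; first exact: ltW.
rewrite leNgt; apply/negP => close; apply: (far k); split; first exact: lt_trans nd.
by apply: tball_meet; rewrite ?r_gt0 ?s_gt0 //; apply: Qcl.1.
Qed.
End TangentBallsNearby.

Lemma finite_set_gt0_lbound (R : realType) (E : set R) :
  finite_set E -> (forall y, E y -> 0 < y) -> exists2 d, 0 < d & forall y, E y -> d <= y.
Proof.
move=> /finite_seqP[s ->]; elim: s => [|a s IH] Epos; first by exists 1.
have [d d0 ds] : exists2 d, 0 < d & forall y, [set` s] y -> d <= y.
  by apply: IH => y ys; apply: Epos; rewrite /= in_cons ys orbT.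
have a0 : 0 < a by apply: Epos; rewrite /= mem_head.
exists (Num.min d a) => [|y]; first by rewrite lt_min d0.
rewrite /= in_cons => /orP[/eqP->|ys]; first by rewrite ge_min lexx orbT.
by rewrite ge_min ds.
Qed.

Lemma finite_set_far (R : realType) (m : nat) (S : set (pt R m)) x :
  finite_set S -> ~ S x -> exists2 d, 0 < d & forall y, S y -> d <= edist x y.
Proof.
move=> Sfin nSx; have Spos : forall d, (edist x @` S) d -> 0 < d.
  by move=> _ [y Sy <-]; apply: edist_gt0 => xy; apply: nSx; rewrite xy.
have [d d0 dS] := finite_set_gt0_lbound (finite_image (edist x) Sfin) Spos.
by exists d => // y Sy; apply: dS; exists y.
Qed.

Section NotNormalNotParacompact.
Variables (R : realType) (m : nat).
Local Notation pt := (pt R m).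
Local Notation Xn := (@Xn R m).
Local Notation Ln := (@Ln R m).
Variables (A B : set pt) (c : nat -> pt).
Hypothesis BLA : B `<=` Ln `\` A.
Hypothesis Bcl : euclid_closed_in_Ln B.
Hypothesis cQ : forall k, condensation B (c k).
Hypothesis c_dense : forall x e, condensation B x -> 0 < e -> exists k, edist (c k) x < e.

Let Q := condensation B.
Let QB : Q `<=` B := @condensation_sub R m B.
Let cB k : B (c k) := QB (cQ k).
Let rangecB : range c `<=` B. Proof. by move=> _ [k _ <-]. Qed.
Let QcB : Q `\` range c `<=` B. Proof. by move=> x [/QB]. Qed.

Lemma tangent_balls_meet_nearby_condensation (s : nat -> R) (r : pt -> R) :
  (forall k, 0 < s k) -> (forall x, 0 < r x) ->
  exists2 b, Q b /\ ~ range c b & forall d, 0 < d ->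
    exists k, edist b (c k) < d /\ tball b (r b) `&` tball (c k) (s k) !=set0.
Proof.
apply: tangent_balls_meet_nearby => //; first exact: condensation_closed.
exact: condensation_perfect.
Qed.

Lemma not_tau_normal : ~ tau_normal A.
Proof.
move=> normal.
have [U [V [oU oV cU QV UV]]] := normal _ _ (tau_closed_sub BLA Bcl rangecB)
  (tau_closed_sub BLA Bcl QcB) (setDIK _ _).
have [s [s0 sU]] := @tau_open_tball_radius R m A (range c) (fun=> U)
  (subset_trans rangecB BLA) (fun x cx => conj oU (cU x cx)).
have [r [r0 rV]] := @tau_open_tball_radius R m A (Q `\` range c) (fun=> V)
  (subset_trans QcB BLA) (fun x Qx => conj oV (QV x Qx)).
have [b [Qb nb] /(_ 1 ltr01)[k [_ [p [pb pk]]]]] :=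
  tangent_balls_meet_nearby_condensation (fun k => s0 (c k)) r0.
have : (U `&` V) p by split; [apply: (sU (c k)) => //; exists k|exact: (rV b)].
by rewrite UV.
Qed.

Definition point_cover k := if k is j.+1 then (Xn `\` B) `|` [set c j] else Xn `\` range c.

Lemma tau_open_point_cover k : tau_open A (point_cover k).
Proof. by case: k => [|j]; [exact: tau_open_XnD rangecB|exact: tau_open_XnDU1]. Qed.

Lemma point_cover_covers : Xn `<=` \bigcup_k point_cover k.
Proof.
move=> x Xx; have [[k _ <-]|ncx] := pselect (range c x); first by exists k.+1 => //; right.
by exists 0%N.
Qed.

Lemma finite_point_cover_range k : finite_set (point_cover k `&` range c).
Proof.
apply: (@sub_finite_set _ _ [set c k.-1]); last exact: finite_set1.
move=> x [+ cx]; have Bx := rangecB cx.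
by case: k => [[_ /(_ cx)]|j [[_ /(_ Bx)]|->]].
Qed.

Lemma not_tau_countably_paracompact : ~ tau_countably_paracompact A.
Proof.
move=> /(_ _ tau_open_point_cover point_cover_covers)[Vs [VsU covV lfin]].
have /choice[cov covP] : forall x, exists V, Xn x -> Vs V /\ V x.
  move=> x; have [Xx|nXx] := pselect (Xn x); last by exists set0.
  by have [V ? ?] := covV x Xx; exists V.
have /choice[W WP] : forall x, exists W, Xn x ->
    [/\ tau_open A W, W x & finite_set [set V | Vs V /\ V `&` W !=set0]].
  move=> x; have [Xx|nXx] := pselect (Xn x); last by exists set0.
  by have [W ?] := lfin x Xx; exists W.
have covc x : range c x -> tau_open A (cov x) /\ cov x x.
  move=> /rangecB/BLA[Lx _]; have [VsV Vx] := covP x (or_intror Lx).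
  by split => //; case: (VsU _ VsV).
have WQ x : (Q `\` range c) x -> tau_open A (W x) /\ W x x.
  by move=> [/QB/BLA[Lx _] _]; have [] := WP x (or_intror Lx).
have [s [s0 sV]] := tau_open_tball_radius (subset_trans rangecB BLA) covc.
have [r [r0 rW]] := tau_open_tball_radius (subset_trans QcB BLA) WQ.
have [b [Qb nb] acc] := tangent_balls_meet_nearby_condensation (fun k => s0 (c k)) r0.
have [_ _ Dfin] := WP b (or_intror (Bcl.1 _ (QB Qb))).
set D := [set V | Vs V /\ V `&` W b !=set0] in Dfin.
pose S := \bigcup_(V in D) (V `&` range c).
have [d d0 far] : exists2 d, 0 < d & forall y, S y -> d <= edist b y.
  apply: finite_set_far => [|[V _ [_ /nb]]//].
  apply: (bigcup_finite Dfin) => V [/VsU[_ [k VU]] _].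
  by apply: sub_finite_set (finite_point_cover_range k) => x [/VU].
have [k [bk [p [pb pk]]]] := acc d d0.
suff /far : S (c k) by lra.
have ck : range c (c k) by exists k.
have [VsV Vck] := covP (c k) (or_intror (Bcl.1 _ (rangecB ck))).
exists (cov (c k)); last by split.
by split => //; exists p; split; [exact: sV pk|exact: rW pb].
Qed.
End NotNormalNotParacompact.

Theorem mainTheorem8 (R : realType) (n : nat) (hn : (2 <= n)%N)
  (A B : set (pt R n.-1)) :
  A `<=` @Ln R n.-1 ->
  B `<=` @Ln R n.-1 `\` A ->
  euclid_closed_in_Ln B ->
  ~ countable B ->
  ~ tau_normal A /\ ~ tau_countably_paracompact A.
Proof.
move=> _ BLA Bcl Bunc; have [x0 Qx0] := condensation_nonempty Bunc.
have [c [cQ c_dense]] := exists_dense_seq Qx0.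
split; first exact: not_tau_normal BLA Bcl cQ c_dense.
exact: not_tau_countably_paracompact BLA Bcl cQ c_dense.
Qed.
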